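(* Let $P$ be a poset with an $\mathbb{R}$-action $\Lambda$, and let $V,W$ be interval-decomposable pfd $P$-persistence modules. If, for some $\epsilon\ge0$, there exists a $\Lambda_\epsilon$-matching between $\mathscr{B}(V)$ and $\mathscr{B}(W)$, then this same partial matching is a bottleneck $\Lambda_\epsilon$-interleaving between $V$ and $W$. Consequently, $$d^\Lambda_{\mathrm{BI}}(V,W)\le d^\Lambda_{\mathrm B}(\mathscr{B}(V),\mathscr{B}(W)).$$
   Context: Let $k$ be a field. A $P$-persistence module is a functor from the poset $P$ (as a category) to $k$-vector spaces; it is pfd if every space is finite-dimensional. An interval of $P$ is a nonempty convex and connected subset (convex: $p,q\in I$, $p\le r\le q$ imply $r\in I$; connected: any two elements are joined by a finite sequence in $I$ with consecutive ones comparable). The interval module $k_I$ is $k$ on $I$ and $0$ elsewhere, with identity maps within $I$ and zero maps otherwise. Every pfd module decomposes uniquely (up to isomorphism and permutation) into indecomposables; $\mathscr{B}(V)$ is the multiset of these summands. $V$ is interval-decomposable if all summands are interval modules; $\mathscr{B}(V)$ is then identified with a multiset of intervals. An $\mathbb{R}$-action on $P$ is a family $\{\Lambda_\epsilon\}_{\epsilon\ge0}$ of poset automorphisms with $p\le\Lambda_\epsilon(p)$, $\Lambda_0=\mathrm{id}$ and $\Lambda_\epsilon\Lambda_\zeta=\Lambda_{\epsilon+\zeta}$. Shifts and interleavings: - $V(\epsilon)_p=V_{\Lambda_\epsilon p}$ and $V(\epsilon)(p,q)=V(\Lambda_\epsilon p,\Lambda_\epsilon q)$; for a morphism $\phi$,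 $\phi(\epsilon)$ has components $\phi_{\Lambda_\epsilon p}$; - $V_{0\to\epsilon}\colon V\to V(\epsilon)$ has components $V(p,\Lambda_\epsilon p)$; - a $\Lambda_\epsilon$-interleaving is a pair $\alpha\colon V\to W(\epsilon)$, $\beta\colon W\to V(\epsilon)$ with $\beta(\epsilon)\alpha=V_{0\to2\epsilon}$ and $\alpha(\epsilon)\beta=W_{0\to2\epsilon}$; - $V$ is $\Lambda_\epsilon$-trivial if $V_{0\to\epsilon}=0$. For $A\subseteq P$ nonempty, $A^\uparrow=\{p:\exists a\in A,\ a\le p\}$ and $A^\downarrow=\{p:\exists a\in A,\ p\le a\}$; $\emptyset^\uparrow=\emptyset^\downarrow=P$. Set $\mathrm{Ex}^\Lambda_\epsilon(A)=\Lambda_\epsilon^{-1}(A)^\uparrow\cap\Lambda_\epsilon(A)^\downarrow$, with $\Lambda_\epsilon^{-1}(A)$ the preimage. A $\Lambda_\epsilon$-matching between multisets of intervals $\mathscr{A},\mathscr{C}$ is a bijection $\sigma$ between submultisets such that: - every unmatched interval $I$ has $k_I$ $\Lambda_{2\epsilon}$-trivial; - $\sigma(I)=J$ implies $I\subseteq\mathrm{Ex}^\Lambda_\epsilon(J)$ and $J\subseteq\mathrm{Ex}^\Lambda_\epsilon(I)$. A bottleneck $\Lambda_\epsilon$-interleaving between $V$ and $W$ is a bijection $\sigma$ between submultisets of $\mathscr{B}(V)$ and $\mathscr{B}(W)$ such that: - all unmatched summands are $\Lambda_{2\epsilon}$-trivial; - each $M$ and $\sigma(M)$ are $\Lambda_\epsilon$-interleaved.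 $d^\Lambda_{\mathrm{BI}}$ and $d^\Lambda_{\mathrm B}$ are the infima of $\epsilon\ge0$ admitting a bottleneck $\Lambda_\epsilon$-interleaving, resp. a $\Lambda_\epsilon$-matching ($\inf\emptyset=+\infty$). *)

From HB Require Import structures.
From mathcomp Require Import all_boot all_order all_algebra.
From mathcomp Require Import boolp classical_sets reals constructive_ereal ereal.
Unset Printing Implicit Defensive.
Import Order.TTheory GRing.Theory Num.Theory.
Local Open Scope ring_scope.
Local Open Scope classical_set_scope.

Section PersistenceDefs.
Context {K : fieldType} {R : realType} {dsp : Order.disp_t} {P : porderType dsp}.

Record pmod := PMod {
  pm_sp : P -> vectType K;
  pm_map : forall p q : P, (p <= q)%O -> pm_sp p -> pm_sp q }.
Arguments pm_map _ {p q}.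

Definition lin {U X : vectType K} (f : U -> X) :=
  forall (a : K) (x y : U), f (a *: x + y) = a *: f x + f y.

Definition is_pmod (V : pmod) :=
  [/\ (forall p q (h : (p <= q)%O), lin (pm_map V h)),
      (forall p (h : (p <= p)%O) x, pm_map V h x = x) &
      (forall p q r (h1 : (p <= q)%O) (h2 : (q <= r)%O) (h3 : (p <= r)%O) x,
          pm_map V h2 (pm_map V h1 x) = pm_map V h3 x)].

Definition is_morph (V W : pmod) (f : forall p, pm_sp V p -> pm_sp W p) :=
  (forall p, lin (f p)) /\
  (forall p q (h : (p <= q)%O) x, f q (pm_map V h x) = pm_map W h (f p x)).

Definition R_action (Lam : R -> P -> P) :=
  [/\ (forall e, 0 <= e -> bijective (Lam e) /\
          forall p q, (p <= q)%O = (Lam e p <= Lam e q)%O),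
      (forall e p, 0 <= e -> (p <= Lam e p)%O),
      (forall p, Lam 0 p = p) &
      (forall e z p, 0 <= e -> 0 <= z -> Lam e (Lam z p) = Lam (e + z) p)].

(** a morphism V -> W(e): components V_p -> W_{Lam e p} *)
Definition is_smorph (Lam : R -> P -> P) (e : R) (V W : pmod)
    (f : forall p, pm_sp V p -> pm_sp W (Lam e p)) :=
  (forall p, lin (f p)) /\
  (forall p q (h : (p <= q)%O) (h' : (Lam e p <= Lam e q)%O) x,
      f q (pm_map V h x) = pm_map W h' (f p x)).

Definition trivial_mod (Lam : R -> P -> P) (e : R) (V : pmod) :=
  forall p (h : (p <= Lam e p)%O) x, pm_map V h x = 0.

(** Lam_e-interleaving; V(2e) is identified with V(e)(e) using
    Lam_{2e} = Lam_e o Lam_e. *)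
Definition interleaved (Lam : R -> P -> P) (e : R) (V W : pmod) :=
  exists (al : forall p, pm_sp V p -> pm_sp W (Lam e p))
         (be : forall p, pm_sp W p -> pm_sp V (Lam e p)),
    [/\ is_smorph Lam e V W al, is_smorph Lam e W V be,
        (forall p (h : (p <= Lam e (Lam e p))%O) x,
            be (Lam e p) (al p x) = pm_map V h x) &
        (forall p (h : (p <= Lam e (Lam e p))%O) x,
            al (Lam e p) (be p x) = pm_map W h x)].

Definition is_interval (I : set P) :=
  [/\ exists p, I p,
      (forall p q r, I p -> I q -> (p <= r)%O -> (r <= q)%O -> I r) &
      (forall p q, I p -> I q -> exists s : seq P,
          [/\ forall x, x \in s -> I x, path (fun x y => x >=< y)%O p s & last p s = q])].

(** interval module k_I : K at points of I (as 'rV_1), 0 elsewhere (as 'rV_0),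
    identity within I, zero otherwise. *)
Definition interval_mod (I : set P) : pmod :=
  @PMod (fun p : P => (('rV[K]_(p \in I))%type : vectType K))
        (fun p q _ x => x *m const_mx 1).

(** internal direct-sum decomposition V ~= (+)_a M a, given by the family of
    morphisms iota a : M a -> V inducing, at every p, a linear bijection
    (+)_a (M a)_p -> V_p (only finitely many (M a)_p are nonzero). *)
Definition decomposition (V : pmod) {A : eqType} (M : A -> pmod)
    (iota : forall a p, pm_sp (M a) p -> pm_sp V p) :=
  (forall a, is_morph (M a) V (iota a)) /\
  forall p, exists s : seq A,
    [/\ uniq s,
        (forall a, a \notin s -> forall y : pm_sp (M a) p, y = 0),
        (forall v : pm_sp V p, exists x : forall a, pm_sp (M a) p,
            v = \sum_(a <- s) iota a p (x a)) &
        (forall x : forall a, pm_sp (M a) p,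
            \sum_(a <- s) iota a p (x a) = 0 -> forall a, a \in s -> x a = 0)].

Definition nonzero_mod (M : pmod) := exists p (x : pm_sp M p), x != 0.

Definition indecomposable (M : pmod) :=
  nonzero_mod M /\
  forall (N : bool -> pmod) (iota : forall b p, pm_sp (N b) p -> pm_sp M p),
    (forall b, is_pmod (N b)) -> decomposition M (A:=bool) N iota ->
    exists b, ~ nonzero_mod (N b).

(** up-/down-closures (with the convention emptyset^up = emptyset^down = P) *)
Definition upset (A : set P) : set P :=
  [set p | A = set0 \/ exists2 a, A a & (a <= p)%O].
Definition downset (A : set P) : set P :=
  [set p | A = set0 \/ exists2 a, A a & (p <= a)%O].

Definition Ex (Lam : R -> P -> P) (e : R) (A : set P) : set P :=
  upset [set p | A (Lam e p)] `&` downset (Lam e @` A).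

(** partial matchings between indexed families (multisets), given by a partial
    injection sigma : A -> option B *)
Definition partial_injection {A B : Type} (sigma : A -> option B) :=
  forall a a' b, sigma a = Some b -> sigma a' = Some b -> a = a'.

Definition matching (Lam : R -> P -> P) (e : R) {A B : Type}
    (I : A -> set P) (J : B -> set P) (sigma : A -> option B) :=
  [/\ partial_injection sigma,
      (forall a, sigma a = None -> trivial_mod Lam (2 * e) (interval_mod (I a))),
      (forall b, (forall a, sigma a <> Some b) ->
                 trivial_mod Lam (2 * e) (interval_mod (J b))) &
      (forall a b, sigma a = Some b -> I a `<=` Ex Lam e (J b) /\ J b `<=` Ex Lam e (I a))].

Definition bottleneck_interleaving (Lam : R -> P -> P) (e : R) {A B : Type}
    (M : A -> pmod) (N : B -> pmod) (sigma : A -> option B) :=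
  [/\ partial_injection sigma,
      (forall a, sigma a = None -> trivial_mod Lam (2 * e) (M a)),
      (forall b, (forall a, sigma a <> Some b) -> trivial_mod Lam (2 * e) (N b)) &
      (forall a b, sigma a = Some b -> interleaved Lam e (M a) (N b))].

(** barcode of V : the family of summands of a decomposition of V into
    indecomposables (unique up to iso and reindexing) *)
Definition indecomposable_decomposition (V : pmod) {A : eqType} (M : A -> pmod)
    (iota : forall a p, pm_sp (M a) p -> pm_sp V p) :=
  [/\ forall a, is_pmod (M a), forall a, indecomposable (M a) &
      decomposition V M iota].

Local Open Scope ereal_scope.

Definition d_B (Lam : R -> P -> P) {A B : Type} (I : A -> set P) (J : B -> set P)
    : \bar R :=
  ereal_inf [set x | exists e : R, [/\ (0 <= e)%R, x = e%:E &
                                     exists sigma, matching Lam e I J sigma]].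

Definition d_BI (Lam : R -> P -> P) (V W : pmod) : \bar R :=
  ereal_inf [set x | exists e : R, [/\ (0 <= e)%R, x = e%:E &
     exists (A B : eqType) (M : A -> pmod) (N : B -> pmod) iotaM iotaN sigma,
       [/\ indecomposable_decomposition V M iotaM,
           indecomposable_decomposition W N iotaN &
           bottleneck_interleaving Lam e M N sigma]]].

End PersistenceDefs.
Arguments pm_map {K dsp P} _ {p q}.
Arguments pmod : clear implicits.

From HB Require Import structures.
From mathcomp Require Import all_boot all_order all_algebra.
From mathcomp Require Import boolp classical_sets reals constructive_ereal ereal.
Import Order.TTheory GRing.Theory Num.Theory.
Local Open Scope ring_scope.
Local Open Scope classical_set_scope.

(** A matched pair satisfies [I ⊆ Ex_ε J] and [J ⊆ Ex_ε I]; by convexity of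
    [I] and [J] this is what makes the maps [k_I -> k_J(ε)] and
    [k_J -> k_I(ε)] that are the identity wherever source and target are both
    [k] natural, and makes their composites the internal maps
    [k_I -> k_I(2ε)], [k_J -> k_J(2ε)].  Unmatched intervals are subject to the
    same triviality condition in both notions.  Interval modules are
    indecomposable: in a splitting of [k_I] into two summands, each point of
    [I] is supported by exactly one summand, that summand does not change
    along comparable pairs of [I], hence is the same on all of the connected
    set [I].  So the given interval decompositions of [V] and [W]
    themselves witness [d_BI <= d_B]. *)

Section LinearMaps.
Context {K : fieldType}.

Lemma lin0 {U X : vectType K} {f : U -> X} : lin f -> f 0 = 0.
Proof.
by move=> f_lin; have := f_lin 1 0 0; rewrite !scale1r addr0 -{1}[f 0]addr0 => /addrI <-.
Qed.

Lemma linZ {U X : vectType K} {f : U -> X} : lin f -> forall a x, f (a *: x) = a *: f x.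
Proof. by move=> f_lin a x; have := f_lin a x 0; rewrite addr0 (lin0 f_lin) addr0. Qed.

Lemma lin_mulmx (m n : nat) (A : 'M[K]_(m, n)) : lin (fun x : 'rV_m => x *m A).
Proof. by move=> a x y; rewrite mulmxDl scalemxAl. Qed.

End LinearMaps.

Section BoolRowVectors.
Context {K : fieldType}.

(** The structure maps of [k_I] are [x *m const_mx 1 : 'rV_b1 -> 'rV_b2] with
    [b1 b2 : bool] read as dimensions [0] or [1]: the identity if
    [b1 = b2 = true] and zero otherwise. *)

Lemma rV_false_eq0 (b : bool) (x : 'rV[K]_b) : ~~ b -> x = 0.
Proof. by case: b x => // x _; rewrite thinmx0. Qed.

Lemma rV_bool_neq0 (b : bool) : b -> exists v : 'rV[K]_b, v != 0.
Proof. by case: b => // _; exists 1%:M; rewrite oner_eq0. Qed.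

Lemma rV_bool_colinear (b : bool) (u v : 'rV[K]_b) : v != 0 -> exists c, u = c *: v.
Proof.
case: b u v => u v; last by rewrite thinmx0 eqxx.
move=> v_neq0; have v00 : v 0 0 != 0.
  by apply: contra v_neq0 => /eqP v0; rewrite [v]mx11_scalar v0 raddf0.
by exists (u 0 0 / v 0 0); apply/rowP => i; rewrite mxE (ord1 i) divfK.
Qed.

Lemma const_mx1_scalar : const_mx 1 = 1%:M :> 'M[K]_1.
Proof. by apply/matrixP => i j; rewrite !mxE (ord1 i) (ord1 j). Qed.

Lemma mulmx_const_mx1_id (b : bool) (x : 'rV[K]_b) : x *m const_mx 1 = x.
Proof. by case: b x => x; rewrite ?const_mx1_scalar ?mulmx1 // !thinmx0. Qed.

Lemma mulmx_const_mx1_neq0 (b1 b2 : bool) (x : 'rV[K]_b1) :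
  b2 -> x != 0 -> x *m (const_mx 1 : 'M_(b1, b2)) != 0.
Proof. by case: b1 b2 x => [] [] // x _; rewrite ?mulmx_const_mx1_id // thinmx0 eqxx. Qed.

Lemma mulmx_const_mx1_comp (b1 b2 b3 : bool) (x : 'rV[K]_b1) : (b1 -> b3 -> b2) ->
  x *m (const_mx 1 : 'M_(b1, b2)) *m (const_mx 1 : 'M_(b2, b3)) = x *m const_mx 1.
Proof.
case: b2 => [_|].
  by rewrite -mulmxA; congr (_ *m _); apply/matrixP => i j; rewrite !mxE big_ord1 !mxE mulr1.
case: b1 x => x; last by rewrite !thinmx0.
by case: b3 => [/(_ isT isT)|_]; last rewrite !thinmx0.
Qed.

End BoolRowVectors.

Section ExGeometry.
Context {R : realType} {dsp : Order.disp_t} {P : porderType dsp}.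
Context {Lam : R -> P -> P} (HLam : R_action Lam) {e : R} (e_ge0 : 0 <= e).

Lemma le_Lam {p q} : (Lam e p <= Lam e q)%O = (p <= q)%O.
Proof. by case: HLam => /(_ e e_ge0) [_ mono] _ _ _; rewrite [RHS]mono. Qed.

Lemma Ex_lower {J : set P} {p} : J !=set0 -> Ex Lam e J p ->
  exists2 a, J (Lam e a) & (a <= p)%O.
Proof.
move=> [j Jj] [[preim0|//] _]; case: HLam => /(_ e e_ge0) [[g _ gK] _] _ _ _.
have : [set q | J (Lam e q)] (g j) by rewrite /= gK.
by rewrite preim0.
Qed.

Lemma Ex_upper {J : set P} {p} : J !=set0 -> Ex Lam e J p ->
  exists2 c, J c & (p <= Lam e c)%O.
Proof.
move=> [j Jj] [_ [img0|[_ [c Jc <-] pc]]]; last by exists c.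
have : (Lam e @` J) (Lam e j) by exists j.
by rewrite img0.
Qed.

Lemma Ex_sub_Lam_mem {I J : set P} {p c} : is_interval J -> I `<=` Ex Lam e J ->
  I p -> J c -> (Lam e p <= c)%O -> J (Lam e p).
Proof.
move=> [J0 convJ _] IJ Ip Jc pc; have [a Ja ap] := Ex_lower J0 (IJ p Ip).
by apply: convJ Ja Jc _ pc; rewrite le_Lam.
Qed.

Lemma Ex_sub_mem {I J : set P} {p q} : is_interval I -> J `<=` Ex Lam e I ->
  I p -> J (Lam e q) -> (p <= q)%O -> I q.
Proof.
move=> [I0 convI _] JI Ip Jq pq; have [c Ic qc] := Ex_upper I0 (JI _ Jq).
by apply: convI Ip Ic pq _; rewrite -le_Lam.
Qed.

End ExGeometry.

Section IntervalModules.
Context {K : fieldType} {dsp : Order.disp_t} {P : porderType dsp}.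

Lemma interval_mod_is_pmod {I : set P} : is_interval I -> is_pmod (interval_mod (K:=K) I).
Proof.
case=> _ convI _; split=> [p q pq|p pp x|p q r pq qr pr x] /=.
- exact: lin_mulmx.
- exact: mulmx_const_mx1_id.
- apply: mulmx_const_mx1_comp => /set_mem Ip /set_mem Ir; apply/mem_set.
  exact: convI Ip Ir pq qr.
Qed.

Lemma interval_propagate {I : set P} {S : P -> Prop} : is_interval I ->
  (forall p q, I p -> I q -> (p >=< q)%O -> S p -> S q) ->
  forall p q, I p -> I q -> S p -> S q.
Proof.
move=> [_ _ connI] stepS p q Ip Iq Sp; have [s [sI ps <-]] := connI p q Ip Iq.
elim: s p Ip Sp sI ps => [//|x s IH] p Ip Sp sI /= /andP[px xs].
have Ix : I x by apply: sI; rewrite mem_head.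
by apply: IH (stepS p x Ip Ix px Sp) _ xs => // y ys; apply: sI; rewrite in_cons ys orbT.
Qed.

End IntervalModules.

Section IntervalInterleaving.
Context {K : fieldType} {R : realType} {dsp : Order.disp_t} {P : porderType dsp}.
Context {Lam : R -> P -> P} (HLam : R_action Lam) {e : R} (e_ge0 : 0 <= e).
Context {I J : set P} (HI : is_interval I) (HJ : is_interval J).

Lemma interval_smorph : I `<=` Ex Lam e J -> J `<=` Ex Lam e I ->
  is_smorph Lam e (interval_mod (K:=K) I) (interval_mod J) (fun p x => x *m const_mx 1).
Proof.
move=> IJ JI; split=> [p|p q pq _ x] /=; first exact: lin_mulmx.
rewrite !mulmx_const_mx1_comp // => /set_mem Ip /set_mem Jq; apply/mem_set.
- by apply: (Ex_sub_Lam_mem HLam e_ge0 HJ IJ Ip Jq); rewrite (le_Lam HLam e_ge0).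
- exact: (Ex_sub_mem HLam e_ge0 HI JI Ip Jq pq).
Qed.

Lemma interval_smorph_comp : I `<=` Ex Lam e J ->
  forall p (h : (p <= Lam e (Lam e p))%O) (x : pm_sp (interval_mod (K:=K) I) p),
    ((x *m const_mx 1 : pm_sp (interval_mod J) (Lam e p)) *m const_mx 1
      : pm_sp (interval_mod I) (Lam e (Lam e p)))
    = pm_map (interval_mod I) h x.
Proof.
move=> IJ p h x /=; apply: mulmx_const_mx1_comp => /set_mem Ip /set_mem IL2p.
have [J0 _ _] := HJ; have [c Jc pc] := Ex_upper J0 (IJ _ IL2p).
apply/mem_set; apply: (Ex_sub_Lam_mem HLam e_ge0 HJ IJ Ip Jc).
by rewrite -(le_Lam HLam e_ge0).
Qed.

End IntervalInterleaving.

Lemma interval_interleaved (K : fieldType) (R : realType) (dsp : Order.disp_t)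
    (P : porderType dsp) (Lam : R -> P -> P) (e : R) (I J : set P) :
  R_action Lam -> 0 <= e -> is_interval I -> is_interval J ->
  I `<=` Ex Lam e J -> J `<=` Ex Lam e I ->
  interleaved Lam e (interval_mod (K:=K) I) (interval_mod J).
Proof.
move=> HLam e_ge0 HI HJ IJ JI.
exists (fun p x => x *m const_mx 1), (fun p x => x *m const_mx 1); split.
- exact: interval_smorph.
- exact: interval_smorph.
- exact: interval_smorph_comp.
- exact: interval_smorph_comp.
Qed.

Definition nonzero_at {K : fieldType} {dsp : Order.disp_t} {P : porderType dsp}
    (M : pmod K dsp P) (p : P) :=
  exists y : pm_sp M p, y != 0.

Section BinaryDecomposition.
Context {K : fieldType} {dsp : Order.disp_t} {P : porderType dsp}.
Context {M : pmod K dsp P} {N : bool -> pmod K dsp P}.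
Context {iota : forall b p, pm_sp (N b) p -> pm_sp M p} (Hd : decomposition M N iota).

Lemma iota_lin b p : lin (iota b p).
Proof. by case: Hd => /(_ b) [+ _] _; apply. Qed.

Lemma iota0 b p : iota b p 0 = 0.
Proof. exact: lin0 (iota_lin b p). Qed.

Lemma iota_natural b p q (pq : (p <= q)%O) y :
  iota b q (pm_map (N b) pq y) = pm_map M pq (iota b p y).
Proof. by case: Hd => /(_ b) [_ +] _; apply. Qed.

Lemma decomposition2_sum p (s : seq bool) (x : forall b, pm_sp (N b) p) : uniq s ->
  (forall b, b \notin s -> forall y : pm_sp (N b) p, y = 0) ->
  \sum_(b <- s) iota b p (x b) = iota true p (x true) + iota false p (x false).
Proof.
move=> s_uniq out_s0.
have iota_out b : b \notin s -> iota b p (x b) = 0.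
  by move=> b_s; rewrite (out_s0 b b_s (x b)) iota0.
rewrite big_uniq // big_mkcond /= big_bool /=.
by congr (_ + _); case: ifP => // /negbT/iota_out.
Qed.

Lemma decomposition2_span p (v : pm_sp M p) :
  exists yt yf, v = iota true p yt + iota false p yf.
Proof.
case: Hd => _ /(_ p) [s [s_uniq out_s0 span _]]; have [x ->] := span v.
by exists (x true), (x false); apply: decomposition2_sum.
Qed.

Lemma decomposition2_free p yt yf :
  iota true p yt + iota false p yf = 0 -> yt = 0 /\ yf = 0.
Proof.
case: Hd => _ /(_ p) [s [s_uniq out_s0 _ free]] sum0.
pose x b : pm_sp (N b) p := if b as b0 return pm_sp (N b0) p then yt else yf.
have x0 : forall b, x b = 0.
  move=> b; have [b_s|b_s] := boolP (b \in s); last exact: out_s0.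
  by apply: free b_s; rewrite decomposition2_sum.
exact: conj (x0 true) (x0 false).
Qed.

Lemma decomposition2_inj b p y : iota b p y = 0 -> y = 0.
Proof.
case: b y => y y0.
- by have [] := @decomposition2_free p y 0; rewrite ?y0 ?iota0 ?addr0.
- by have [] := @decomposition2_free p 0 y; rewrite ?y0 ?iota0 ?add0r.
Qed.

End BinaryDecomposition.

Section IntervalSplitting.
Context {K : fieldType} {dsp : Order.disp_t} {P : porderType dsp} {I : set P}.
Context {N : bool -> pmod K dsp P}.
Context {iota : forall b p, pm_sp (N b) p -> pm_sp (interval_mod (K:=K) I) p}.
Context (Hd : decomposition (interval_mod I) N iota).

Lemma iota_neq0 b p (y : pm_sp (N b) p) : y != 0 -> iota b p y != 0.
Proof. by apply: contra => /eqP/(decomposition2_inj Hd) ->. Qed.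

Lemma nonzero_at_mem {b p} : nonzero_at (N b) p -> I p.
Proof.
move=> [y /iota_neq0 iota_y_neq0]; apply/set_mem; apply: contraTT iota_y_neq0 => pI.
by rewrite negbK; apply/eqP/rV_false_eq0.
Qed.

Lemma nonzero_at_cover b {p} : I p -> nonzero_at (N b) p \/ nonzero_at (N (~~ b)) p.
Proof.
move=> /mem_set/(@rV_bool_neq0 K) [v v_neq0].
have [yt [yf vE]] := decomposition2_span Hd _ v.
have [yt0|] := eqVneq yt 0; last by case: b => ?; [left | right]; exists yt.
have [yf0|] := eqVneq yf 0; last by case: b => ?; [right | left]; exists yf.
by move: v_neq0; rewrite vE yt0 yf0 !(iota0 Hd) addr0 eqxx.
Qed.

Lemma nonzero_at_excl {b p} : nonzero_at (N b) p -> nonzero_at (N (~~ b)) p -> False.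
Proof.
suff excl : nonzero_at (N true) p -> nonzero_at (N false) p -> False.
  by case: b => // /[swap]; exact: excl.
move=> [yt yt_neq0] [yf /iota_neq0 iota_yf_neq0].
have [c tE] := rV_bool_colinear _ (iota true p yt) _ iota_yf_neq0.
have [yt0 _] : yt = 0 /\ - c *: yf = 0.
  by apply: (decomposition2_free Hd); rewrite (linZ (iota_lin Hd false p)) scaleNr -tE subrr.
by rewrite yt0 eqxx in yt_neq0.
Qed.

Lemma nonzero_at_le {b p q} : (p <= q)%O -> I q -> nonzero_at (N b) p -> nonzero_at (N b) q.
Proof.
move=> pq Iq [y /iota_neq0 iota_y_neq0]; exists (pm_map (N b) pq y).
have : iota b q (pm_map (N b) pq y) != 0.
  by rewrite (iota_natural Hd) /=; apply: mulmx_const_mx1_neq0 (mem_set Iq) _.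
by apply: contraNneq => ->; rewrite (iota0 Hd).
Qed.

Lemma nonzero_at_comparable {b p q} : I p -> I q -> (p >=< q)%O ->
  nonzero_at (N b) p -> nonzero_at (N b) q.
Proof.
move=> Ip Iq /orP[pq|qp] Np; first exact: nonzero_at_le pq Iq Np.
case: (nonzero_at_cover b Iq) => // Nq; exfalso.
exact: nonzero_at_excl Np (nonzero_at_le qp Ip Nq).
Qed.

End IntervalSplitting.

Lemma interval_mod_indecomposable (K : fieldType) (dsp : Order.disp_t)
    (P : porderType dsp) (I : set P) :
  is_interval I -> indecomposable (interval_mod (K:=K) I).
Proof.
move=> HI; split.
  by case: (HI) => [[p /mem_set/(@rV_bool_neq0 K) [v v_neq0]] _ _]; exists p, v.
move=> N iota _ Hd.
have [[pt Nt]|] := pselect (nonzero_mod (N true)); last by exists true.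
have [[pf Nf]|] := pselect (nonzero_mod (N false)); last by exists false.
exfalso; apply: (nonzero_at_excl Hd (b:=true) _ Nf).
apply: (interval_propagate (S := nonzero_at (N true)) HI _ _ _
          (nonzero_at_mem Hd Nt) (nonzero_at_mem Hd Nf) Nt).
by move=> p q; apply: (nonzero_at_comparable Hd).
Qed.

Lemma interval_decomposition_indecomposable (K : fieldType) (dsp : Order.disp_t)
    (P : porderType dsp) (V : pmod K dsp P) (A : eqType) (I : A -> set P)
    (iota : forall a p, pm_sp (interval_mod (K:=K) (I a)) p -> pm_sp V p) :
  (forall a, is_interval (I a)) -> decomposition V (fun a => interval_mod (I a)) iota ->
  indecomposable_decomposition V (fun a => interval_mod (I a)) iota.
Proof.
by move=> HI Hd; split=> // a; [apply: interval_mod_is_pmod | apply: interval_mod_indecomposable].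
Qed.

Lemma matching_bottleneck_interleaving (K : fieldType) (R : realType)
    (dsp : Order.disp_t) (P : porderType dsp) (Lam : R -> P -> P) (e : R)
    (A B : Type) (I : A -> set P) (J : B -> set P) (sigma : A -> option B) :
  R_action Lam -> 0 <= e ->
  (forall a, is_interval (I a)) -> (forall b, is_interval (J b)) ->
  matching (K:=K) Lam e I J sigma ->
  bottleneck_interleaving Lam e (fun a => interval_mod (K:=K) (I a))
                                (fun b => interval_mod (K:=K) (J b)) sigma.
Proof.
move=> HLam e_ge0 HI HJ [sigma_inj unmatchedI unmatchedJ matched].
split=> // a b /matched [IJ JI]; exact: interval_interleaved.
Qed.

Theorem proposition2p18 (K : fieldType) (R : realType) (dsp : Order.disp_t)
    (P : porderType dsp) (Lam : R -> P -> P) (HLam : R_action Lam)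
    (V W : pmod K dsp P) (HV : is_pmod V) (HW : is_pmod W)
    (A B : eqType) (I : A -> set P) (J : B -> set P)
    (HI : forall a, is_interval (I a)) (HJ : forall b, is_interval (J b))
    (iotaV : forall a p, pm_sp (interval_mod (K:=K) (I a)) p -> pm_sp V p)
    (iotaW : forall b p, pm_sp (interval_mod (K:=K) (J b)) p -> pm_sp W p)
    (HdV : decomposition V (fun a => interval_mod (K:=K) (I a)) iotaV)
    (HdW : decomposition W (fun b => interval_mod (K:=K) (J b)) iotaW) :
  (forall (e : R) (sigma : A -> option B), 0 <= e ->
     matching (K:=K) Lam e I J sigma ->
     bottleneck_interleaving Lam e (fun a => interval_mod (K:=K) (I a))
                                   (fun b => interval_mod (K:=K) (J b)) sigma)
  /\ (d_BI Lam V W <= d_B (K:=K) Lam I J)%E.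
Proof.
have bottleneck e sigma e_ge0 :=
  @matching_bottleneck_interleaving K R dsp P Lam e A B I J sigma HLam e_ge0 HI HJ.
split=> [e sigma|]; first exact: bottleneck.
apply: ereal_inf_le_tmp => _ [e [e_ge0 -> [sigma sigma_matching]]].
exists e; split=> //; exists A, B, _, _, iotaV, iotaW, sigma.
by split; [apply: interval_decomposition_indecomposable.. | exact: bottleneck].
Qed.
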